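(* Let $\mathscr H$ be a complex Hilbert space and $\mathbf{T}=(T_1,\dots,T_d)\in\mathbb{B}(\mathscr H)^d$. Then for every positive integer $n$, $$w_e(\mathbf{T}^n)\le\sqrt{d}\,w_e^n(\mathbf{T}).$$
   Context: $\mathbb{B}(\mathscr H)$ denotes the bounded linear operators on $\mathscr H$. For $\mathbf{T}=(T_1,\dots,T_d)\in\mathbb{B}(\mathscr H)^d$, $w_e(\mathbf{T})=\sup\{(\sum_{k=1}^d|\langle T_kx,x\rangle|^2)^{1/2}: \|x\|=1\}$ and $\mathbf{T}^n=(T_1^n,\dots,T_d^n)$. *)

From HB Require Import structures.
From mathcomp Require Import all_boot all_order all_algebra.
From mathcomp Require Import complex.
From mathcomp Require Import boolp classical_sets reals.
Set Implicit Arguments. Unset Strict Implicit. Unset Printing Implicit Defensive.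
Import Order.TTheory GRing.Theory Num.Theory.
Local Open Scope ring_scope.
Local Open Scope classical_set_scope.

Section Hilbert.
Variables (R : realType) (V : lmodType R[i]) (ip : V -> V -> R[i]).

Definition ip_norm (x : V) : R := Num.sqrt (complex.Re (ip x x)).

Definition is_inner_product : Prop :=
  [/\ forall (a : R[i]) (x y z : V), ip (a *: x + y) z = a * ip x z + ip y z,
      forall x y : V, ip y x = conjc (ip x y),
      forall x : V, 0 <= complex.Re (ip x x)
    & forall x : V, ip x x = 0 -> x = 0].

Definition ip_complete : Prop :=
  forall u : nat -> V,
    (forall e : R, 0 < e -> exists N : nat, forall m n : nat,
        (N <= m)%N -> (N <= n)%N -> ip_norm (u m - u n) < e) ->
    exists l : V, forall e : R, 0 < e -> exists N : nat, forall n : nat,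
        (N <= n)%N -> ip_norm (u n - l) < e.

Definition is_complex_hilbert : Prop := is_inner_product /\ ip_complete.

Definition bounded_op (T : V -> V) : Prop :=
  (forall (a : R[i]) (x y : V), T (a *: x + y) = a *: T x + T y) /\
  exists c : R, forall x : V, ip_norm (T x) <= c * ip_norm x.

Definition euclid_oprad (d : nat) (T : 'I_d -> V -> V) : R :=
  sup [set Num.sqrt (\sum_(k < d) (Normc.normc (ip (T k x) x)) ^+ 2)
      | x in [set x : V | ip_norm x = 1]].

Definition tuple_pow (d : nat) (T : 'I_d -> V -> V) (n : nat) : 'I_d -> V -> V :=
  fun k => iter n (T k).

End Hilbert.

From HB Require Import structures.
From mathcomp Require Import all_boot all_order all_algebra.
From mathcomp Require Import cyclic separable cyclotomic complex lra.
From mathcomp Require Import boolp classical_sets reals.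
Set Implicit Arguments. Unset Strict Implicit. Unset Printing Implicit Defensive.
Import Order.TTheory GRing.Theory Num.Theory.
Local Open Scope ring_scope.
Local Open Scope complex_scope.

(* The heart of the argument is Berger's power inequality for one operator S
   on a complex inner-product space: if |<Sy,y>| <= W ||y||^2 for all y, then
   |<S^n x,x>| <= W^n ||x||^2.  For W = 1 we use the root-of-unity argument:
   with w a primitive n-th root of unity and x_k = sum_(m < n) (w^k S)^m x,
   one has x_k - w^k S x_k = x - S^n x and sum_k x_k = n x, hence
   n <x - S^n x, x> = sum_k (||x_k||^2 - w^k <S x_k, x_k>), whose real part is
   nonnegative; rotating S by an n-th root of the phase of <S^n x, x> turns
   this real-part bound into a bound on the modulus.  General W follows by
   rescaling, and W = 0 by letting W' > 0 tend to 0.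

   Finally, every component of T satisfies
   |<T_k y,y>| <= w_e(T) ||y||^2, so by Berger each |<T_k^n x,x>| is at most
   w_e(T)^n on unit vectors, and summing d such squares gives the factor
   sqrt d. *)

(* Over an algebraically closed field in which n is invertible, X^n - 1 is
   separable and splits, so it has n distinct roots, among them a primitive
   n-th root of unity. *)
Lemma primitive_root_exists (F : closedFieldType) n :
  (0 < n)%N -> n%:R != 0 :> F -> exists w : F, n.-primitive_root w.
Proof.
move=> n_gt0 nF0; pose p : {poly F} := 'X^n - 1.
have [r Dp] := closed_field_poly_normal p.
rewrite (monicP _) ?monicXnsubC // scale1r in Dp.
have rn1 : all n.-unity_root r by apply/allP=> z; rewrite -root_prod_XsubC -Dp.
have sz_r : (n < (size r).+1)%N by rewrite -(size_prod_XsubC r id) -Dp size_XnsubC.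
have [|z] := hasP (has_prim_root n_gt0 rn1 _ sz_r); last by exists z.
by rewrite -separable_prod_XsubC -Dp separable_Xn_sub_1.
Qed.

Lemma sum_prim_root_pow (F : idomainType) n (w : F) m :
  n.-primitive_root w -> (0 < m < n)%N -> \sum_(k < n) (w ^+ m) ^+ k = 0.
Proof.
move=> pw /andP[m_gt0 lt_mn].
have wmn : (w ^+ m) ^+ n - 1 = 0.
  by rewrite -exprM mulnC exprM (prim_expr_order pw) expr1n subrr.
have wm_neq1 : w ^+ m - 1 != 0.
  rewrite subr_eq0 -(expr0 w) (eq_prim_root_expr pw) mod0n modn_small //.
  by rewrite eqn0Ngt m_gt0.
by move/eqP: wmn; rewrite subrX1 mulf_eq0 (negbTE wm_neq1) => /eqP.
Qed.

Section ComplexNumbers.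
Variable R : realType.
Implicit Types (z t : R[i]) (r : R).

Lemma normc_ge0 z : 0 <= Normc.normc z.
Proof. by case: z => a b /=; rewrite sqrtr_ge0. Qed.

Lemma normc_real r : 0 <= r -> Normc.normc r%:C = r.
Proof. by move=> r0; rewrite /= expr0n addr0 sqrtr_sqr ger0_norm. Qed.

Lemma Re_le_normc z : complex.Re z <= Normc.normc z.
Proof.
case: z => a b /=; apply: le_trans (ler_norm a) _.
by rewrite -sqrtr_sqr ler_sqrt ?lerDl ?addr_ge0 ?sqr_ge0.
Qed.

Lemma Re_realM r z : complex.Re (r%:C * z) = r * complex.Re z.
Proof. by case: z => a b /=; rewrite mul0r subr0. Qed.

Lemma normc_prim_root_pow n (w : R[i]) k :
  n.-primitive_root w -> Normc.normc (w ^+ k) = 1.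
Proof.
move=> pw; have n_gt0 := prim_order_gt0 pw.
have nw : `|w| = 1.
  apply/eqP; rewrite -(pexpr_eq1 n_gt0 (normr_ge0 w)) -normrX.
  by rewrite (prim_expr_order pw) normr1.
by apply: complexI; rewrite -[LHS]/`|w ^+ k| normrX nw expr1n.
Qed.

Lemma phase z : exists t, Normc.normc t = 1 /\ t * z = (Normc.normc z)%:C.
Proof.
have [->|z0] := eqVneq z 0.
  by exists 1; rewrite Normc.normc1 mulr0 Normc.normc0.
have nz0 : `|z| != 0 by rewrite normr_eq0.
exists (z^* / `|z|); split.
  apply: complexI; rewrite -[LHS]/`|z^* / `|z| |.
  by rewrite normrM normfV norm_conjC normr_id divff.
by rewrite mulrAC -normCKC expr2 mulrK ?unitfE.
Qed.

Lemma mul_conjc_unit t : Normc.normc t = 1 -> t * t^* = 1.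
Proof. by move=> t1; rewrite -normCK -[`|t|]/(_%:C) t1 expr1n. Qed.

End ComplexNumbers.

Section InnerProduct.
Variables (R : realType) (V : lmodType R[i]) (ip : V -> V -> R[i]).
Hypothesis hip : is_inner_product ip.

Lemma ipDl x y z : ip (x + y) z = ip x z + ip y z.
Proof.
by case: (hip : [/\ _, _, _ & _]) => linl _ _ _; rewrite -{1}[x]scale1r linl mul1r.
Qed.

Lemma ip0l z : ip 0 z = 0.
Proof. by apply: (addrI (ip 0 z)); rewrite -ipDl !addr0. Qed.

Lemma ipZl a x z : ip (a *: x) z = a * ip x z.
Proof.
by case: (hip : [/\ _, _, _ & _]) => linl _ _ _; rewrite -[a *: x]addr0 linl ip0l addr0.
Qed.

Lemma ipNl x z : ip (- x) z = - ip x z.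
Proof. by rewrite -scaleN1r ipZl mulN1r. Qed.

Lemma ipBl x y z : ip (x - y) z = ip x z - ip y z.
Proof. by rewrite ipDl ipNl. Qed.

Lemma ip_conj x y : ip y x = (ip x y)^*.
Proof. by case: (hip : [/\ _, _, _ & _]). Qed.

Lemma ipZr a x z : ip z (a *: x) = a^* * ip z x.
Proof. by rewrite ip_conj ipZl [ip z x]ip_conj; apply: rmorphM. Qed.

Lemma ipDr x y z : ip z (x + y) = ip z x + ip z y.
Proof. by rewrite ip_conj ipDl [ip z x]ip_conj [ip z y]ip_conj; apply: rmorphD. Qed.

Lemma ipBr x y z : ip z (x - y) = ip z x - ip z y.
Proof. by rewrite ip_conj ipBl [ip z x]ip_conj [ip z y]ip_conj; apply: rmorphB. Qed.

Lemma ip0r z : ip z 0 = 0.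
Proof. by rewrite ip_conj ip0l conjc0. Qed.

Lemma ip_sumr (I : finType) (f : I -> V) z : ip z (\sum_i f i) = \sum_i ip z (f i).
Proof.
by apply: (big_rec2 (fun a b => ip z a = b)) => [|i a b _ <-]; rewrite ?ip0r ?ipDr.
Qed.

Lemma ip_self_ge0 x : 0 <= complex.Re (ip x x).
Proof. by case: (hip : [/\ _, _, _ & _]). Qed.

Lemma ip_self_real x : ip x x = (complex.Re (ip x x))%:C.
Proof.
have := ip_conj x x; case: (ip x x) => a b /= [] hb.
have : b *+ 2 == 0 by rewrite mulr2n {2}hb subrr.
by rewrite mulrn_eq0 /= => /eqP ->.
Qed.

Lemma ip_self_eq0 x : complex.Re (ip x x) = 0 -> x = 0.
Proof.
case: (hip : [/\ _, _, _ & _]) => _ _ _ def0 Rx0.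
by apply: def0; rewrite ip_self_real Rx0.
Qed.

Lemma ip_norm_sqr x : ip_norm ip x ^+ 2 = complex.Re (ip x x).
Proof. exact/sqr_sqrtr/ip_self_ge0. Qed.

Lemma normc_ip_le x y :
  Normc.normc (ip x y) <= (complex.Re (ip x x) + complex.Re (ip y y)) / 2.
Proof.
have [t [t1 txy]] := phase (ip x y).
have conj_txy : t^* * (ip x y)^* = (Normc.normc (ip x y))%:C.
  by rewrite -[RHS]conjc_real -txy [RHS]rmorphM.
have := ip_self_ge0 (t *: x - y).
rewrite ipBl !ipBr !ipZl !ipZr [ip y x]ip_conj mulrA mul_conjc_unit // mul1r.
rewrite txy conj_txy !raddfB /=; lra.
Qed.

End InnerProduct.

Definition linear_map (R : realType) (V : lmodType R[i]) (S : V -> V) :=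
  forall (a : R[i]) (x y : V), S (a *: x + y) = a *: S x + S y.

Section LinearMaps.
Variables (R : realType) (V : lmodType R[i]) (S : V -> V).
Hypothesis linS : linear_map S.

Lemma lin0 : S 0 = 0.
Proof.
have := linS 1 0 0; rewrite !scale1r addr0 => S0.
by apply: (addrI (S 0)); rewrite addr0 -S0.
Qed.

Lemma linD x y : S (x + y) = S x + S y.
Proof. by rewrite -{1}[x]scale1r linS scale1r. Qed.

Lemma linZ a x : S (a *: x) = a *: S x.
Proof. by rewrite -[a *: x]addr0 linS lin0 addr0. Qed.

Lemma lin_sum (I : finType) (f : I -> V) : S (\sum_i f i) = \sum_i S (f i).
Proof.
by apply: (big_rec2 (fun a b => S a = b)) => [|i a b _ <-]; rewrite ?lin0 ?linD.
Qed.

Lemma scale_lin (c : R[i]) : linear_map (fun y => c *: S y).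
Proof. by move=> a x y; rewrite linS scalerDr !scalerA mulrC. Qed.

Lemma iter_scale (c : R[i]) n x :
  iter n (fun y => c *: S y) x = c ^+ n *: iter n S x.
Proof.
elim: n => [|n IH]; first by rewrite expr0 scale1r.
by rewrite !iterS IH linZ scalerA exprS.
Qed.

End LinearMaps.

Section BergerCore.
Variables (R : realType) (V : lmodType R[i]) (ip : V -> V -> R[i]).
Hypothesis hip : is_inner_product ip.
Variable S : V -> V.
Hypothesis linS : linear_map S.

Lemma geometric_telescope n (c : R[i]) x :
  \sum_(m < n) c ^+ m *: iter m S x - c *: S (\sum_(m < n) c ^+ m *: iter m S x)
  = x - c ^+ n *: iter n S x.
Proof.
set a := fun m => c ^+ m *: iter m S x.
have shift : c *: S (\sum_(m < n) a m) = \sum_(m < n) a m.+1.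
  rewrite lin_sum // scaler_sumr; apply: eq_bigr => m _.
  by rewrite /a linZ // scalerA -exprS iterS.
have tele : \sum_(m < n) (a m.+1 - a m) = a n - a 0.
  by rewrite -(big_mkord xpredT (fun m => a m.+1 - a m)) telescope_sumr.
by rewrite shift -opprB -sumrB tele opprB /a expr0 scale1r.
Qed.

(* Summing the geometric sums over the n-th roots of unity w^k gives n x,
   since the powers of w^m cancel out for 0 < m < n. *)
Lemma sum_geometric_roots n (w : R[i]) x : n.-primitive_root w ->
  \sum_(k < n) \sum_(m < n) (w ^+ k) ^+ m *: iter m S x = n%:R *: x.
Proof.
move=> pw; rewrite exchange_big /=.
rewrite (eq_bigr (fun m : 'I_n => (\sum_(k < n) (w ^+ m) ^+ k) *: iter m S x));
  last by move=> m _; rewrite scaler_suml; apply: eq_bigr => k _; rewrite exprAC.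
case: n pw => [|n] pw; first by rewrite big_ord0 scale0r.
have vanish : \sum_(i < n)
    (\sum_(k < n.+1) (w ^+ lift ord0 i) ^+ k) *: iter (lift ord0 i) S x = 0.
  by apply: big1 => m _; rewrite (sum_prim_root_pow pw) ?scale0r //= ltnS ltn_ord.
rewrite big_ord_recl vanish addr0 expr0 /=.
under eq_bigr => k _ do rewrite expr1n.
by rewrite sumr_const card_ord.
Qed.

Lemma berger_Re n : (0 < n)%N ->
  (forall y, Normc.normc (ip (S y) y) <= complex.Re (ip y y)) ->
  forall x, complex.Re (ip (iter n S x) x) <= complex.Re (ip x x).
Proof.
move=> n_gt0 contrS x.
have [w pw] : exists w : R[i], n.-primitive_root w.
  by apply: primitive_root_exists; rewrite // pnatr_eq0 -lt0n.
pose xk (k : 'I_n) := \sum_(m < n) (w ^+ k) ^+ m *: iter m S x.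
have xkE k : xk k - w ^+ k *: S (xk k) = x - iter n S x.
  by rewrite geometric_telescope exprAC (prim_expr_order pw) expr1n scale1r.
have decomp : n%:R * ip (x - iter n S x) x =
    \sum_k (ip (xk k) (xk k) - w ^+ k * ip (S (xk k)) (xk k)).
  rewrite -(conjc_nat R n) -(ipZr hip) -(sum_geometric_roots x pw) (ip_sumr hip).
  by apply: eq_bigr => k _; rewrite -{1}(xkE k) (ipBl hip) (ipZl hip).
have : 0 <= complex.Re (n%:R * ip (x - iter n S x) x).
  rewrite decomp raddf_sum; apply: sumr_ge0 => k _; rewrite raddfB subr_ge0 /=.
  apply: le_trans (Re_le_normc _) _.
  by rewrite Normc.normcM (normc_prim_root_pow _ pw) mul1r contrS.
have natC : n%:R = (n%:R : R)%:C by rewrite rmorph_nat.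
by rewrite natC Re_realM (ipBl hip) raddfB pmulr_rge0 ?ltr0n // subr_ge0.
Qed.

End BergerCore.

(* A quantity bounded by e^n Q for every e > 0 is nonpositive; this handles
   the degenerate case W = 0 of Berger's inequality. *)
Lemma le0_of_pow_bounds (F : realFieldType) n (a Q : F) : (0 < n)%N -> 0 <= Q ->
  (forall e, 0 < e -> a <= e ^+ n * Q) -> a <= 0.
Proof.
move=> n_gt0 Q_ge0 bnd; apply/ler_addgt0Pr => e e_gt0; rewrite add0r.
pose eps := Num.min 1 (e / (Q + 1)).
have Q1_gt0 : 0 < Q + 1 by rewrite ltr_wpDl.
have eps_gt0 : 0 < eps by rewrite lt_min ltr01 divr_gt0.
have eps_small : eps * (Q + 1) <= e by rewrite -ler_pdivlMr // ge_min lexx orbT.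
have epsn : eps ^+ n <= eps.
  case: n n_gt0 {bnd} => // n _; rewrite exprS ler_piMr ?(ltW eps_gt0) //.
  by rewrite exprn_ile1 ?(ltW eps_gt0) // ge_min lexx.
have epsn_ge0 : 0 <= eps ^+ n by rewrite exprn_ge0 ?ltW.
apply: le_trans (bnd eps eps_gt0) _; nra.
Qed.

Section Berger.
Variables (R : realType) (V : lmodType R[i]) (ip : V -> V -> R[i]).
Hypothesis hip : is_inner_product ip.

(* For W = 1: rotate S by an n-th root of the phase of <S^n x, x>, which
   turns the real part in berger_Re into the modulus. *)
Lemma berger_unit (S : V -> V) n :
  linear_map S -> (0 < n)%N ->
  (forall y, Normc.normc (ip (S y) y) <= complex.Re (ip y y)) ->
  forall x, Normc.normc (ip (iter n S x) x) <= complex.Re (ip x x).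
Proof.
move=> linS n_gt0 contrS x.
have [t [t1 tc]] := phase (ip (iter n S x) x).
pose v := n.-root t.
have vn : v ^+ n = t by rewrite rootCK.
have v1 : Normc.normc v = 1.
  apply: complexI; rewrite -[LHS]/`|v|; apply/eqP.
  by rewrite -(pexpr_eq1 n_gt0 (normr_ge0 v)) -normrX vn -[`|t|]/(_%:C) t1.
have := berger_Re hip (scale_lin linS v) n_gt0 _ x.
rewrite iter_scale // (ipZl hip) vn tc; apply => y.
by rewrite (ipZl hip) Normc.normcM v1 mul1r contrS.
Qed.

(* For W > 0: rescale S by 1 / W. *)
Lemma berger_pos (S : V -> V) n W :
  linear_map S -> (0 < n)%N -> 0 < W ->
  (forall y, Normc.normc (ip (S y) y) <= W * complex.Re (ip y y)) ->
  forall x, Normc.normc (ip (iter n S x) x) <= W ^+ n * complex.Re (ip x x).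
Proof.
move=> linS n_gt0 W_gt0 bndS x.
have normc_scale c y z : Normc.normc (ip ((W^-1)%:C ^+ c *: y) z) =
    W ^- c * Normc.normc (ip y z).
  rewrite (ipZl hip) Normc.normcM -rmorphXn normc_real ?exprVn //.
  by rewrite invr_ge0 exprn_ge0 ?ltW.
have := berger_unit (scale_lin linS (W^-1)%:C) n_gt0 _ x.
rewrite iter_scale // normc_scale mulrC ler_pdivrMr ?exprn_gt0 // mulrC.
apply=> y; have := normc_scale 1%N (S y) y; rewrite !expr1 => ->.
by rewrite mulrC ler_pdivrMr // mulrC.
Qed.

Lemma berger (S : V -> V) n W :
  linear_map S -> (0 < n)%N -> 0 <= W ->
  (forall y, Normc.normc (ip (S y) y) <= W * complex.Re (ip y y)) ->
  forall x, Normc.normc (ip (iter n S x) x) <= W ^+ n * complex.Re (ip x x).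
Proof.
move=> linS n_gt0 W_ge0 bndS x.
have [W_gt0|] := boolP (0 < W); first exact: berger_pos.
rewrite lt_def W_ge0 andbT negbK => /eqP W0; rewrite W0 expr0n gtn_eqF // mul0r.
apply: (le0_of_pow_bounds n_gt0 (ip_self_ge0 hip x)) => e e_gt0.
apply: berger_pos => // y; apply: le_trans (bndS y) _.
by rewrite W0 mul0r mulr_ge0 ?(ltW e_gt0) ?(ip_self_ge0 hip).
Qed.

End Berger.

Lemma sqrt_sum_sqr_le (F : rcfType) d (a : 'I_d -> F) M : 0 <= M ->
  (forall k, 0 <= a k <= M) -> Num.sqrt (\sum_k a k ^+ 2) <= Num.sqrt d%:R * M.
Proof.
move=> M_ge0 bnd_a; apply: (@le_trans _ _ (Num.sqrt (\sum_(k < d) M ^+ 2))).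
  rewrite ler_sqrt ?sumr_ge0 // => [|k _]; last exact: sqr_ge0.
  by apply: ler_sum => k _; case/andP: (bnd_a k) => a_ge0 aM; rewrite lerXn2r ?nnegrE.
by rewrite sumr_const card_ord -(mulr_natl (M ^+ 2)) sqrtrM ?ler0n // sqrtr_sqr ger0_norm.
Qed.

Lemma le_sqrt_sum_sqr (F : rcfType) d (a : 'I_d -> F) k :
  0 <= a k -> a k <= Num.sqrt (\sum_j a j ^+ 2).
Proof.
move=> a_ge0; rewrite -[a k]ger0_norm // -sqrtr_sqr ler_sqrt ?sumr_ge0 // => [|j _].
  by rewrite (bigD1 k) //= lerDl sumr_ge0 // => j _; exact: sqr_ge0.
exact: sqr_ge0.
Qed.

Section EuclideanRadius.
Variables (R : realType) (V : lmodType R[i]) (ip : V -> V -> R[i]).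
Hypothesis hip : is_inner_product ip.
Variable d : nat.

Definition euclid_values (T : 'I_d -> V -> V) : set R :=
  [set Num.sqrt (\sum_(k < d) (Normc.normc (ip (T k x) x)) ^+ 2)
    | x in [set x : V | ip_norm ip x = 1]].

Lemma euclid_opradE (T : 'I_d -> V -> V) :
  euclid_oprad ip T = sup (euclid_values T).
Proof. by []. Qed.

(* Without unit vectors, w_e is the supremum of the empty set, i.e. 0. *)
Lemma euclid_oprad_no_unit (T : 'I_d -> V -> V) :
  ~ (exists x, ip_norm ip x = 1) -> euclid_oprad ip T = 0.
Proof.
move=> no_unit; rewrite euclid_opradE.
suff -> : euclid_values T = set0 by exact: sup0.
by apply/seteqP; split => y //= [x x1 _]; apply: no_unit; exists x.
Qed.

Lemma unit_Re x : ip_norm ip x = 1 -> complex.Re (ip x x) = 1.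
Proof. by move=> x1; rewrite -(ip_norm_sqr hip) x1 expr1n. Qed.

Lemma euclid_oprad_le (T : 'I_d -> V -> V) M : 0 <= M ->
  (forall x, ip_norm ip x = 1 ->
     Num.sqrt (\sum_(k < d) (Normc.normc (ip (T k x) x)) ^+ 2) <= M) ->
  euclid_oprad ip T <= M.
Proof.
move=> M_ge0 bnd; have [[x x1]|no_unit] := pselect (exists x, ip_norm ip x = 1).
  by apply: ge_sup => [|_ [y y1 <-]]; [eexists; exists x | exact: bnd].
by rewrite euclid_oprad_no_unit.
Qed.

Variable T : 'I_d -> V -> V.
Hypothesis hT : forall k, bounded_op ip (T k).

Lemma euclid_values_bounded : has_ubound (euclid_values T).
Proof.
have [c hc] := choice (fun k => proj2 (hT k)).
pose M := \sum_(k < d) (c k ^+ 2 + 1) / 2.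
have termM k : 0 <= (c k ^+ 2 + 1) / 2 by rewrite divr_ge0 ?addr_ge0 ?sqr_ge0.
exists (Num.sqrt d%:R * M) => _ [x /= x1 <-].
apply: sqrt_sum_sqr_le => [|k]; first exact: sumr_ge0.
rewrite normc_ge0 /=; apply: le_trans (normc_ip_le hip _ _) _.
apply: le_trans (_ : (c k ^+ 2 + 1) / 2 <= M); last first.
  by rewrite /M (bigD1 k) //= lerDl; apply: sumr_ge0 => j _.
rewrite (unit_Re x1) ler_pM2r ?invr_gt0 ?ltr0n // lerD2r -(ip_norm_sqr hip).
have := hc k x; rewrite x1 mulr1 => Tx_le.
by rewrite lerXn2r ?nnegrE ?sqrtr_ge0 // (le_trans (sqrtr_ge0 _) Tx_le).
Qed.

Lemma euclid_oprad_ge0 : 0 <= euclid_oprad ip T.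
Proof.
have [[x x1]|no_unit] := pselect (exists x, ip_norm ip x = 1).
  by apply: le_trans (sqrtr_ge0 _) (ub_le_sup euclid_values_bounded _); exists x.
by rewrite euclid_oprad_no_unit.
Qed.

Lemma numerical_bound k y :
  Normc.normc (ip (T k y) y) <= euclid_oprad ip T * complex.Re (ip y y).
Proof.
have linT : linear_map (T k) by case: (hT k).
have [Q0|Q_neq0] := eqVneq (complex.Re (ip y y)) 0.
  by rewrite (ip_self_eq0 hip Q0) lin0 // (ip0r hip) Normc.normc0 mulr0.
set Q := complex.Re (ip y y) in Q_neq0 *.
have Q_gt0 : 0 < Q by rewrite lt_def Q_neq0 ip_self_ge0.
pose r := Num.sqrt Q; have r_gt0 : 0 < r by rewrite sqrtr_gt0.
have r2 : r ^+ 2 = Q by rewrite sqr_sqrtr // ltW.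
pose u := (r^-1)%:C *: y.
have ip_u z : ip z u = (r^-1)%:C * ip z y.
  by rewrite (ipZr hip); congr (_ * _); exact: conjc_real.
have u1 : ip_norm ip u = 1.
  rewrite /ip_norm ip_u (ipZl hip) mulrA -rmorphM Re_realM -/Q -r2.
  by rewrite -expr2 -exprMn mulVf ?gt_eqF // expr1n sqrtr1.
have Tu_le : Normc.normc (ip (T k u) u) <= euclid_oprad ip T.
  apply: le_trans (ub_le_sup euclid_values_bounded _); last by exists u.
  exact: (le_sqrt_sum_sqr (a := fun j => Normc.normc (ip (T j u) u)) (normc_ge0 _)).
move: Tu_le; rewrite ip_u /u linZ // (ipZl hip) mulrA -rmorphM Normc.normcM.
have rinv_ge0 : 0 <= r^-1 by rewrite invr_ge0 ltW.
rewrite normc_real ?mulr_ge0 // -invfM -expr2 r2.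
by rewrite mulrC ler_pdivrMr.
Qed.

End EuclideanRadius.

Theorem theorem2p6 (R : realType) (V : lmodType R[i]) (ip : V -> V -> R[i])
  (hH : is_complex_hilbert ip) (d : nat) (T : 'I_d -> V -> V)
  (hT : forall k : 'I_d, bounded_op ip (T k)) (n : nat) (hn : (0 < n)%N) :
  euclid_oprad ip (tuple_pow T n) <= Num.sqrt (d%:R) * euclid_oprad ip T ^+ n.
Proof.
have [hip _] := hH.
have W_ge0 := euclid_oprad_ge0 hip hT.
have pow_bound k x : ip_norm ip x = 1 ->
    Normc.normc (ip (iter n (T k) x) x) <= euclid_oprad ip T ^+ n.
  move=> x1; rewrite -[_ ^+ n]mulr1 -(unit_Re hip x1).
  by apply: berger => //; [case: (hT k) | exact: numerical_bound].
apply: euclid_oprad_le => [|x x1]; first by rewrite mulr_ge0 ?sqrtr_ge0 ?exprn_ge0.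
apply: sqrt_sum_sqr_le => [|k]; first exact: exprn_ge0.
by rewrite normc_ge0 pow_bound.
Qed.
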